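(* Let $s,t,\ell,m$ be integers with $1\le t\le \ell \le m$ and $1 \le s \le t$. Then $\mathfrak{w}_{\ell}^{(s)}(t;\ell,m)=0$ if $s \ne t$, while $$\mathfrak{w}_{\ell}^{(t)}(t;\ell,m) = \mathfrak{w}_{\ell}(t;\ell,m) = \frac{q-1}{q}\left(\mu_t(\ell,m) - (-1)^t q^{\binom{t}{2}}{\ell\brack t}_q \right).$$
   Context: $q$ is a prime power. $\mu_t(\ell,m)$ is the number of $\ell\times m$ matrices over $\mathbb{F}_q$ of rank exactly $t$. For an $\ell\times m$ matrix $M=(m_{ij})$ and $1\le r\le\ell$, $\tau_r(M)=m_{11}+\cdots+m_{rr}$ and $\underline{M}_r$ is the matrix of its first $r$ rows. $\mathfrak w_r(t;\ell,m)$ is the number of $\ell\times m$ matrices $M$ over $\mathbb{F}_q$ with $\mathrm{rk}(M)=t$ and $\tau_r(M)\ne0$, and $\mathfrak w^{(s)}_r(t;\ell,m)$ is the number of those that additionally satisfy $\mathrm{rk}(\underline{M}_r)=s$. ${n\brack k}_q$ is the Gaussian binomial coefficient. *)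

From HB Require Import structures.
From mathcomp Require Import all_boot all_order all_algebra.
Set Implicit Arguments. Unset Strict Implicit. Unset Printing Implicit Defensive.
Import GRing.Theory Num.Theory.

(* tau_r(M) = m_11 + ... + m_rr : sum of the diagonal entries (i,i) with i < r *)
Definition tau (F : fieldType) (l m : nat) (r : nat) (M : 'M[F]_(l, m)) : F :=
  (\sum_(i < l) \sum_(j < m | (nat_of_ord i == nat_of_ord j) && (i < r)%N) M i j)%R.

(* underline M_r : the matrix of the first r rows of M (r <= l assumed) *)
Definition first_rows (F : fieldType) (l m : nat) (r : nat) (M : 'M[F]_(l, m))
  : 'M[F]_(minn r l, m) :=
  rowsub (widen_ord (geq_minr r l)) M.

Definition mu (F : finFieldType) (t l m : nat) : nat :=
  #|[set M : 'M[F]_(l, m) | \rank M == t]|.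

Definition w (F : finFieldType) (r t l m : nat) : nat :=
  #|[set M : 'M[F]_(l, m) | (\rank M == t) && (tau r M != 0%R)]|.

Definition ws (F : finFieldType) (r s t l m : nat) : nat :=
  #|[set M : 'M[F]_(l, m) | [&& \rank M == t, tau r M != 0%R
                             & \rank (first_rows r M) == s]]|.

Definition gauss_binom (q n k : nat) : rat :=
  if (k <= n)%N then
    (\prod_(i < k) (((q ^ (n - i))%:R - 1) / ((q ^ i.+1)%:R - 1)))%R
  else 0%R.

(** Write [delta x = [x = 0] - [x = 1]] and [N_c] for the number of rank-[t]
  matrices [M] with [sum_i M_(i, f i) = c], where [f] is injective (for [tau],
  [f] is the diagonal).  Scaling by [c] shows [N_c = N_1] for [c <> 0], so
  [w = (q - 1) N_1] and [mu = N_0 + w]; everything reduces to the alternating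
  sum [N_0 - N_1 = sum_(rk M = t) delta (tr_f M)], which equals
  [(-1)^t q^(t choose 2) [l choose t]_q].
  This is proved by peeling off the first row [r] of [M]: a row in the row
  space of the remaining rows keeps the rank, any other one raises it by one,
  and [delta] summed over a subspace vanishes unless the subspace is zero at
  the column [f 0].  That column is then zero in all remaining rows, so the
  induction runs over matrices vanishing on a set [S] of columns, and yields
  the q-Pascal recursion of the right-hand side.  Finally, the first [l] rows
  of [M] are all of [M], which settles the statements about [s]. *)

From mathcomp Require Import all_boot all_order all_algebra.
From mathcomp Require Import ring.
Import GRing.Theory Num.Theory.
Set Implicit Arguments. Unset Strict Implicit. Unset Printing Implicit Defensive.
Local Open Scope ring_scope.

(** * Gaussian binomial coefficients *)

Lemma gauss_binomE q n k : (k <= n)%N ->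
  gauss_binom q n k =
  (\prod_(i < k) ((q ^ (n - i))%:R - 1)) / \prod_(i < k) ((q ^ i.+1)%:R - 1).
Proof. by move=> kn; rewrite /gauss_binom kn big_split /= prodfV. Qed.

Lemma gauss_binomS q n k : (k <= n)%N ->
  gauss_binom q n k.+1 =
  gauss_binom q n k * ((q ^ (n - k))%:R - 1) / ((q ^ k.+1)%:R - 1).
Proof.
rewrite leq_eqVlt => /predU1P[-> | kn].
  by rewrite /gauss_binom ltnn subnn expn0 subrr mulr0 mul0r.
by rewrite !gauss_binomE ?(ltnW kn) // !big_ord_recr /= invfM; ring.
Qed.

Lemma gauss_binomSS_ratio q n k : (k <= n)%N ->
  gauss_binom q n.+1 k.+1 =
  gauss_binom q n k * ((q ^ n.+1)%:R - 1) / ((q ^ k.+1)%:R - 1).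
Proof.
move=> kn; rewrite !gauss_binomE // big_ord_recl big_ord_recr subn0 /= invfM.
rewrite (eq_bigr (fun i : 'I_k => (q ^ (n - i))%:R - 1)) //; ring.
Qed.

Lemma gauss_binom_pascal q n k : (1 < q)%N ->
  gauss_binom q n.+1 k.+1 =
  gauss_binom q n k + q%:R ^+ k.+1 * gauss_binom q n k.+1.
Proof.
move=> q_gt1; have [kn | nk] := leqP k n; last first.
  rewrite /gauss_binom ltnS leqNgt nk ifF ?mulr0 ?addr0 //.
  by apply/negbTE; rewrite -ltnNge ltnS ltnW.
have qk1_neq0 : q%:R ^+ k.+1 - 1 != 0 :> rat.
  by rewrite subr_eq0 -natrX pnatr_eq1 gtn_eqF // -{1}(expn0 q) ltn_exp2l.
rewrite gauss_binomSS_ratio // gauss_binomS // !natrX.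
have -> : n.+1 = (k.+1 + (n - k))%N by rewrite addSn subnKC.
by rewrite exprD; field.
Qed.

Definition alt_gauss_binom q l t : rat :=
  (-1) ^+ t * q%:R ^+ 'C(t, 2) * gauss_binom q l t.

Lemma alt_gauss_binom0 q l : alt_gauss_binom q l 0 = 1.
Proof. by rewrite /alt_gauss_binom /gauss_binom leq0n big_ord0 !mulr1. Qed.

Lemma alt_gauss_binom0S q t : alt_gauss_binom q 0 t.+1 = 0.
Proof. by rewrite /alt_gauss_binom /gauss_binom ltn0 mulr0. Qed.

Lemma alt_gauss_binomSS q l t : (1 < q)%N ->
  alt_gauss_binom q l.+1 t.+1 =
  q%:R ^+ t.+1 * alt_gauss_binom q l t.+1 - q%:R ^+ t * alt_gauss_binom q l t.
Proof.
move=> q_gt1; rewrite /alt_gauss_binom gauss_binom_pascal // binS bin1.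
by rewrite exprD !exprS; ring.
Qed.

(** * Sums of [delta01] over row spaces *)

Lemma sum_andb_const (R : ringType) (I : finType) (P : pred I) (b : bool)
    (G : I -> R) :
  \sum_(i | P i && b) G i = b%:R * \sum_(i | P i) G i.
Proof.
case: b; rewrite ?mul1r ?mul0r; first by apply: eq_bigl => i; rewrite andbT.
by rewrite big_pred0 // => i; rewrite andbF.
Qed.

Lemma sum_col_mx (R : nmodType) (T : finType) p l m (G : 'M[T]_(p + l, m) -> R) :
  \sum_M G M = \sum_(N : 'M[T]_(l, m)) \sum_(U : 'M[T]_(p, m)) G (col_mx U N).
Proof.
rewrite pair_bigA /= (reindex (fun UN : 'M_(l, m) * 'M_(p, m) => col_mx UN.2 UN.1)) //.
exists (fun M => (dsubmx M, usubmx M)) => [[N U] _ | M _] /=.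
  by rewrite col_mxKd col_mxKu.
by rewrite vsubmxK.
Qed.

Definition delta01 (F : ringType) (x : F) : rat := (x == 0)%:R - (x == 1)%:R.

Lemma sum_delta01_subspace (F : finFieldType) n (V : pred 'rV[F]_n)
    (j : 'I_n) (v0 : 'rV[F]_n) (a : F) :
  (forall u v, V u -> V v -> V (u + v)) -> (forall c v, V v -> V (c *: v)) ->
  V v0 -> v0 0 j != 0 ->
  \sum_(x | V x) delta01 (a + x 0 j) = 0.
Proof.
move=> VD VZ Vv0 v0j_neq0.
pose v := (v0 0 j)^-1 *: v0.
have Vv : V v by apply: VZ.
have vj : v 0 j = 1 by rewrite mxE mulVf.
have VNv : V (- v) by rewrite -scaleN1r; apply: VZ.
(* translating by [v] raises the [j]-th entry by [1] *)
rewrite /delta01 sumrB; apply/eqP; rewrite subr_eq0; apply/eqP.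
rewrite (reindex_inj (addrI (- v))) /=.
apply: eq_big => x.
  apply/idP/idP => Vx; last exact: VD.
  by have := VD _ _ Vv Vx; rewrite addNKr.
by move=> _; rewrite mxE mxE vj addrCA -[in RHS](subr_eq0 _ 1) addrC.
Qed.

Lemma card_rowspace (F : finFieldType) m n (A : 'M[F]_(m, n)) :
  #|[pred x : 'rV[F]_n | (x <= A)%MS]| = (#|F| ^ \rank A)%N.
Proof.
have inj : injective (fun y : 'rV[F]_(\rank A) => y *m row_base A).
  exact: row_free_inj (row_base_free A).
transitivity #|{: 'rV[F]_(\rank A)}|; last by rewrite card_mx mul1n.
rewrite -(card_codom inj); apply: eq_card => x; rewrite inE -(eq_row_base A).
by apply/submxP/codomP => [[D ->]|[D ->]]; exists D.
Qed.

Lemma mxrank_col_mx_row (F : fieldType) l m (r : 'rV[F]_m) (N : 'M[F]_(l, m)) :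
  \rank (col_mx r N) = (\rank N + ~~ (r <= N)%MS)%N.
Proof.
rewrite -addsmxE; have [rN | rNn] := boolP (r <= N)%MS.
  by rewrite (addsmx_idPr rN).1 addn0.
have lt := ltn_leqif (mxrank_leqif_sup (addsmxSr r N)).
rewrite addsmx_sub submx_refl andbT (negbTE rNn) /= in lt.
apply/eqP; rewrite eqn_leq addn1 lt andbT.
apply: leq_trans (mxrank_adds_leqif r N).1 _.
by rewrite addnC -(addn1 (\rank N)) leq_add2l rank_leq_row.
Qed.

Definition zero_cols (F : ringType) l m (S : {set 'I_m}) (N : 'M[F]_(l, m)) :=
  [forall i, forall k, (k \in S) ==> (N i k == 0)].

Definition trace_along (F : ringType) l m (f : 'I_l -> 'I_m) (N : 'M[F]_(l, m)) :=
  \sum_i N i (f i).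

Section ZeroCols.
Variables (F : fieldType) (m : nat).

Lemma zero_colsP l (S : {set 'I_m}) (N : 'M[F]_(l, m)) :
  reflect (forall i k, k \in S -> N i k = 0) (zero_cols S N).
Proof.
apply: (iffP forallP) => [H i k kS | H i].
  by move/forallP: (H i) => /(_ k) /implyP /(_ kS) /eqP.
by apply/forallP => k; apply/implyP => kS; rewrite H.
Qed.

Lemma zero_cols_col_mx l (S : {set 'I_m}) (r : 'rV[F]_m) (N : 'M[F]_(l, m)) :
  zero_cols S (col_mx r N) = zero_cols S r && zero_cols S N.
Proof.
apply/zero_colsP/andP => [H | [/zero_colsP Hr /zero_colsP HN]].
  split; apply/zero_colsP => i k kS.
    by have := H (lshift l i) k kS; rewrite col_mxEu.
  by have := H (rshift 1 i) k kS; rewrite col_mxEd.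
move=> i k kS; rewrite -[i]splitK; case: (split i) => i0 /=.
  by rewrite col_mxEu Hr.
by rewrite col_mxEd HN.
Qed.

Lemma zero_colsU1 l (S : {set 'I_m}) j (N : 'M[F]_(l, m)) :
  zero_cols (j |: S) N = zero_cols S N && [forall i, N i j == 0].
Proof.
apply/zero_colsP/andP => [H | [/zero_colsP H1 /forallP H2] i k].
  split; first by apply/zero_colsP => i k kS; apply: H; rewrite in_setU1 kS orbT.
  by apply/forallP => i; rewrite H // setU11.
by rewrite in_setU1 => /orP[/eqP -> | kS]; [apply/eqP | apply: H1].
Qed.

Lemma submx_col0 l (r : 'rV[F]_m) (N : 'M[F]_(l, m)) k :
  (r <= N)%MS -> (forall i, N i k = 0) -> r 0 k = 0.
Proof.
by move=> /submxP[D ->] Nk0; rewrite mxE big1 // => i _; rewrite Nk0 mulr0.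
Qed.

Lemma zero_cols_submx l (S : {set 'I_m}) (r : 'rV[F]_m) (N : 'M[F]_(l, m)) :
  zero_cols S N -> (r <= N)%MS -> zero_cols S r.
Proof.
move=> /zero_colsP N0 rN; apply/zero_colsP => i k kS; rewrite (ord1 i).
by apply: (submx_col0 rN) => i'; apply: N0.
Qed.

End ZeroCols.

Lemma trace_along_col_mx (F : ringType) l m (f : 'I_(1 + l) -> 'I_m)
    (r : 'rV[F]_m) (N : 'M[F]_(l, m)) :
  trace_along f (col_mx r N) = r 0 (f (lshift l ord0)) + trace_along (f \o @rshift 1 l) N.
Proof.
rewrite /trace_along big_split_ord big_ord1 col_mxEu; congr (_ + _).
by apply: eq_bigr => i _; rewrite col_mxEd.
Qed.

Lemma trace_alongZ (F : ringType) l m (f : 'I_l -> 'I_m) (c : F) (N : 'M[F]_(l, m)) :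
  trace_along f (c *: N) = c * trace_along f N.
Proof. by rewrite /trace_along mulr_sumr; apply: eq_bigr => i _; rewrite mxE. Qed.

Section DeltaSums.
Variables (F : finFieldType) (m : nat).

Lemma sum_delta01_rowspace l (N : 'M[F]_(l, m)) j a :
  \sum_(r : 'rV[F]_m | (r <= N)%MS) delta01 (a + r 0 j) =
  if [forall i, N i j == 0] then (#|F| ^ \rank N)%:R * delta01 a else 0.
Proof.
case: ifP => [/forallP Nj0 | /negbT].
  rewrite (eq_bigr (fun _ => delta01 a)) => [|r rN]; last first.
    by rewrite (submx_col0 rN) ?addr0 // => i; apply/eqP.
  by rewrite sumr_const mulr_natl -(card_rowspace N).
rewrite negb_forall => /existsP[i Nij].
apply: (@sum_delta01_subspace _ _ _ _ (row i N)).
- by move=> u v; apply: addmx_sub.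
- by move=> c v; apply: scalemx_sub.
- exact: row_sub.
- by rewrite mxE.
Qed.

Lemma sum_delta01_zero_cols (S : {set 'I_m}) j a : j \notin S ->
  \sum_(r : 'rV[F]_m | zero_cols S r) delta01 (a + r 0 j) = 0.
Proof.
move=> jS; apply: (@sum_delta01_subspace _ _ _ _ (delta_mx 0 j)).
- move=> u v /zero_colsP u0 /zero_colsP v0; apply/zero_colsP => i k kS.
  by rewrite mxE u0 // v0 // addr0.
- move=> c v /zero_colsP v0; apply/zero_colsP => i k kS.
  by rewrite mxE v0 // mulr0.
- apply/zero_colsP => i k kS; rewrite mxE.
  by case: (k =P j) => [ek | _]; [rewrite -ek kS in jS | rewrite andbF].
- by rewrite mxE !eqxx oner_eq0.
Qed.

Lemma sum_delta01_col_mx l (S : {set 'I_m}) (N : 'M[F]_(l, m)) j a (t : nat) :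
  j \notin S -> zero_cols S N ->
  \sum_(r : 'rV[F]_m | zero_cols S r && (\rank (col_mx r N) == t))
     delta01 (a + r 0 j) =
  ((\rank N == t)%:R - ((\rank N).+1 == t)%:R) *
  \sum_(r : 'rV[F]_m | (r <= N)%MS) delta01 (a + r 0 j).
Proof.
move=> jS zN.
have sum_out :
    \sum_(r : 'rV[F]_m | zero_cols S r && ~~ (r <= N)%MS) delta01 (a + r 0 j) =
    - \sum_(r : 'rV[F]_m | (r <= N)%MS) delta01 (a + r 0 j).
  have := sum_delta01_zero_cols a jS; rewrite (bigID (fun r => (r <= N)%MS)) /=.
  rewrite (eq_bigl (fun r => (r <= N)%MS)) => [|r]; last first.
    by case rN: (r <= N)%MS; rewrite ?andbF // (zero_cols_submx zN rN).
  by move/eqP; rewrite addrC addr_eq0 => /eqP.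
rewrite (bigID (fun r => (r <= N)%MS)) /=.
rewrite (eq_bigl (fun r => (r <= N)%MS && (\rank N == t))) => [|r]; last first.
  rewrite mxrank_col_mx_row; case rN: (r <= N)%MS; rewrite ?andbF //=.
  by rewrite addn0 (zero_cols_submx zN rN) andbT.
rewrite [X in _ + X](eq_bigl (fun r =>
    (zero_cols S r && ~~ (r <= N)%MS) && ((\rank N).+1 == t))) => [|r]; last first.
  by rewrite mxrank_col_mx_row; case: (r <= N)%MS; rewrite ?andbF //= addn1 !andbT.
by rewrite !sum_andb_const sum_out mulrN mulrBl.
Qed.

End DeltaSums.

(** * The alternating sum over rank-[t] matrices *)

Definition delta_sum (F : finFieldType) l m (S : {set 'I_m}) (f : 'I_l -> 'I_m) t :=
  \sum_(N : 'M[F]_(l, m) | (\rank N == t) && zero_cols S N)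
     delta01 (trace_along f N).

Lemma delta_sum_rank0 (F : finFieldType) l m (S : {set 'I_m}) (f : 'I_l -> 'I_m) :
  delta_sum F S f 0 = 1.
Proof.
rewrite /delta_sum (big_pred1 0) => [|N]; last first.
  rewrite /= mxrank_eq0 andb_idr // => /eqP ->.
  by apply/zero_colsP => i k _; rewrite mxE.
rewrite /trace_along big1 => [|i _]; last by rewrite mxE.
by rewrite /delta01 eqxx eq_sym oner_eq0 subr0.
Qed.

Lemma delta_sum_step (F : finFieldType) l m (S : {set 'I_m})
    (f : 'I_(1 + l) -> 'I_m) (t : nat) :
  f (lshift l ord0) \notin S ->
  delta_sum F S f t.+1 =
  #|F|%:R ^+ t.+1 * delta_sum F (f (lshift l ord0) |: S) (f \o @rshift 1 l) t.+1
  - #|F|%:R ^+ t * delta_sum F (f (lshift l ord0) |: S) (f \o @rshift 1 l) t.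
Proof.
set j := f (lshift l ord0); set f' := f \o @rshift 1 l; move=> jS.
rewrite /delta_sum big_mkcond sum_col_mx.
transitivity (\sum_(N : 'M[F]_(l, m)) if zero_cols (j |: S) N then
  ((\rank N == t.+1)%:R * #|F|%:R ^+ t.+1 - (\rank N == t)%:R * #|F|%:R ^+ t)
  * delta01 (trace_along f' N) else 0).
  apply: eq_bigr => N _; have [zN | zNn] := boolP (zero_cols S N); last first.
    rewrite zero_colsU1 (negbTE zNn) big1 // => r _.
    by rewrite zero_cols_col_mx (negbTE zNn) !andbF.
  rewrite -big_mkcond /=.
  rewrite (eq_bigl (fun r : 'rV[F]_m =>
    zero_cols S r && (\rank (col_mx r N) == t.+1))) => [|r];
    last by rewrite zero_cols_col_mx zN andbT andbC.
  rewrite (eq_bigr (fun r : 'rV[F]_m => delta01 (trace_along f' N + r 0 j))) => [|r _];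
    last by rewrite trace_along_col_mx addrC.
  rewrite sum_delta01_col_mx // sum_delta01_rowspace zero_colsU1 zN /= natrX.
  case: ifP => _; rewrite ?mulr0 // eqSS.
  have [-> | ne1] := eqVneq (\rank N) t.+1; first by rewrite (gtn_eqF (ltnSn t)) /=; ring.
  by have [-> | ne] := eqVneq (\rank N) t; rewrite ?(negbTE ne1) ?(negbTE ne) /=; ring.
rewrite [in RHS]big_mkcond [X in _ - _ * X]big_mkcond !mulr_sumr -sumrB.
apply: eq_bigr => N _; case: (zero_cols _ N); rewrite ?andbF ?mulr0 ?subrr //.
by case: (\rank N == t.+1); case: (\rank N == t); rewrite /=; ring.
Qed.

Theorem delta_sum_alt_gauss_binom (F : finFieldType) l m (S : {set 'I_m})
    (f : 'I_l -> 'I_m) (t : nat) :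
  injective f -> (forall i, f i \notin S) ->
  delta_sum F S f t = alt_gauss_binom #|F| l t.
Proof.
elim: l S f t => [|l IH] S f [|t] f_inj fS; rewrite ?delta_sum_rank0 ?alt_gauss_binom0 //.
  rewrite alt_gauss_binom0S /delta_sum big_pred0 // => N.
  by rewrite (flatmx0 N) mxrank0.
have f'_inj : injective (f \o @rshift 1 l) := inj_comp f_inj (@rshift_inj 1 l).
have f'S i : (f \o @rshift 1 l) i \notin f (@lshift 1 l ord0) |: S.
  by rewrite in_setU1 negb_or fS andbT /= (inj_eq f_inj) -val_eqE.
rewrite (@delta_sum_step F l m S f t) ?fS //.
by rewrite alt_gauss_binomSS ?card_finNzRing_gt1 // !IH.
Qed.

(** * Counting matrices by rank and trace *)

Section RankTraceCount.
Variables (F : finFieldType) (l m t : nat) (f : 'I_l -> 'I_m).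
Local Notation q := #|F|.

Definition card_rank_trace (c : F) :=
  #|[set M : 'M[F]_(l, m) | (\rank M == t) && (trace_along f M == c)]|.

Lemma card_rank_traceZ c : c != 0 -> card_rank_trace c = card_rank_trace 1%R.
Proof.
move=> c_neq0; rewrite /card_rank_trace -(card_preimset _ (scalerI c_neq0)).
apply: eq_card => M; rewrite !inE mxrank_scale_nz // trace_alongZ.
by rewrite -[X in _ * _ == X]mulr1 (inj_eq (mulfI c_neq0)).
Qed.

Lemma card_rank_trace_neq0 :
  #|[set M : 'M[F]_(l, m) | (\rank M == t) && (trace_along f M != 0)]| =
  (q.-1 * card_rank_trace 1%R)%N.
Proof.
rewrite -sum1_card (partition_big (trace_along f) (predC1 0)) => [|M]; last first.
  by rewrite inE => /andP[].
rewrite -(cardC1 (0 : F)) -sum_nat_const; apply: eq_bigr => c /= c_neq0.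
rewrite -(card_rank_traceZ c_neq0) /card_rank_trace -sum1_card; apply: eq_bigl => M.
by rewrite !inE -andbA; case: (trace_along f M =P c) => [-> | _]; rewrite ?c_neq0 ?andbF.
Qed.

Lemma mu_card_rank_trace :
  mu F t l m = (card_rank_trace 0%R +
    #|[set M : 'M[F]_(l, m) | (\rank M == t) && (trace_along f M != 0%R)]|)%N.
Proof.
rewrite /mu -(cardsID [set M : 'M[F]_(l, m) | trace_along f M == 0]).
by congr (_ + _); apply: eq_card => M; rewrite !inE // andbC.
Qed.

Lemma card_rank_trace_sub : injective f ->
  (card_rank_trace 0)%:R - (card_rank_trace 1)%:R = alt_gauss_binom q l t.
Proof.
move=> f_inj; rewrite -(@delta_sum_alt_gauss_binom F l m set0 f t f_inj) => [|i];
  last by rewrite inE.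
have zc0 (M : 'M[F]_(l, m)) : zero_cols set0 M by apply/zero_colsP => i k; rewrite inE.
rewrite /delta_sum /card_rank_trace /delta01 sumrB -!sum1_card !natr_sum.
by congr (_ - _); rewrite big_mkcond [RHS]big_mkcond; apply: eq_bigr => M _;
  rewrite inE zc0 andbT; case: (\rank M == t); case: (trace_along f M == _).
Qed.

Theorem card_rank_trace_neq0E : injective f ->
  (#|[set M : 'M[F]_(l, m) | (\rank M == t) && (trace_along f M != 0)]|%:R : rat) =
  (q%:R - 1) / q%:R * ((mu F t l m)%:R - alt_gauss_binom q l t).
Proof.
move=> f_inj; have q_gt1 := card_finNzRing_gt1 F.
have q_neq0 : q%:R != 0 :> rat by rewrite pnatr_eq0 -lt0n ltnW.
rewrite -card_rank_trace_sub // mu_card_rank_trace card_rank_trace_neq0.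
by rewrite natrD natrM -subn1 natrB ?(ltnW q_gt1) //; field.
Qed.

End RankTraceCount.

Lemma mxrank_first_rows (F : fieldType) l m (M : 'M[F]_(l, m)) :
  \rank (first_rows l M) = \rank M.
Proof.
apply/eqP; rewrite eqn_leq mxrankS ?rowsub_sub //=; apply: mxrankS.
apply/row_subP => i; have il : (i < minn l l)%N by rewrite minnn ltn_ord.
have -> : row i M = row (Ordinal il) (first_rows l M).
  by rewrite /first_rows row_rowsub; congr row; apply: val_inj.
exact: row_sub.
Qed.

Lemma tau_trace_along (F : fieldType) l m (lm : (l <= m)%N) (M : 'M[F]_(l, m)) :
  tau l M = trace_along (widen_ord lm) M.
Proof.
rewrite /tau /trace_along; apply: eq_bigr => i _.
by rewrite (big_pred1 (widen_ord lm i)) // => j; rewrite ltn_ord andbT eq_sym.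
Qed.

Theorem mainTheorem15 (F : finFieldType) (s t l m : nat) :
  (1 <= t)%N -> (t <= l)%N -> (l <= m)%N -> (1 <= s)%N -> (s <= t)%N ->
  (s != t -> ws F l s t l m = 0%N) /\
  ws F l t t l m = w F l t l m /\
  ((w F l t l m)%:R : rat) =
    ((#|F|%:R - 1) / #|F|%:R) *
    ((mu F t l m)%:R - (-1) ^+ t * (#|F|%:R) ^+ 'C(t, 2) * gauss_binom #|F| l t).
Proof.
move=> _ _ lm _ _; split; [|split].
- move=> st; apply: eq_card0 => M; rewrite !inE mxrank_first_rows.
  by case: eqP => [-> | //]; rewrite [t == s]eq_sym (negbTE st) andbF.
- by apply: eq_card => M; rewrite !inE mxrank_first_rows; case: eqP; rewrite ?andbT.
have widen_inj : injective (widen_ord lm) by move=> i j /(congr1 val) /= /val_inj.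
rewrite -/(alt_gauss_binom #|F| l t) -(@card_rank_trace_neq0E F l m t _ widen_inj).
by congr (_%:R); apply: eq_card => M; rewrite !inE tau_trace_along.
Qed.
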